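(* Let $\beta>0$, let $\mathbf{s}=(\mathbf{s}_{\mathrm{sys}},\mathbf{s}_{\mathrm{env}})$ with $\mathbf{s}_{\mathrm{sys}}=(\mathbf{s}_1,\dots,\mathbf{s}_K)$, and let $\mathbf{x}=(\mathbf{x}_1,\dots,\mathbf{x}_K)$ where $\mathbf{x}_i$ and $\mathbf{s}_i$ live in the same Euclidean space. Let $p_1,\dots,p_K$ be prior densities and $U_{\mathrm{env}}$ an environment energy. Suppose the interaction energy is quadratic in $\mathbf{s}_{\mathrm{sys}}$ given $\mathbf{s}_{\mathrm{env}}$: $$\exp(-\beta U_{\mathrm{int}}(\mathbf{s}_{\mathrm{sys}},\mathbf{s}_{\mathrm{env}}))\propto\mathcal{N}(\mathbf{s}_{\mathrm{sys}}\mid\boldsymbol{\mu}_c(\mathbf{s}_{\mathrm{env}}),\boldsymbol{\Sigma}_c(\mathbf{s}_{\mathrm{env}})).$$ Assume the forward kernels at diffusion time $t>0$ satisfy $$\prod_{i=1}^K q_t^{(i)}(\mathbf{s}_i\mid\mathbf{x}_i)=\mathcal{N}(\mathbf{s}_{\mathrm{sys}}\mid\mathbf{A}_t\mathbf{x},\boldsymbol{\Sigma}_t)$$ with $\mathbf{A}_t$ square and invertible, and let the finite-$t$ context schedule be $$q_{\mathrm{ctx}}(\mathbf{s},t)\propto\exp(-\beta U_{\mathrm{env}}(\mathbf{s}_{\mathrm{env}}))\,q_{\mathrm{int}}(\mathbf{s}_{\mathrm{sys}}\mid\mathbf{s}_{\mathrm{env}},t),\qquad q_{\mathrm{int}}(\mathbf{s}_{\mathrm{sys}}\mid\mathbf{s}_{\mathrm{env}},t)=\mathcal{N}(\mathbf{s}_{\mathrm{sys}}\mid\boldsymbol{\mu}_q(\mathbf{s}_{\mathrm{env}},t),\boldsymbol{\Sigma}_q(\mathbf{s}_{\mathrm{env}},t)).$$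 Define $$\pi_t(\mathbf{x},\mathbf{s}_{\mathrm{env}})\propto\int q_{\mathrm{ctx}}(\mathbf{s},t)\prod_{i=1}^K p_i(\mathbf{x}_i)\,q_t^{(i)}(\mathbf{s}_i\mid\mathbf{x}_i)\,d\mathbf{s}_{\mathrm{sys}},\qquad \pi_0(\mathbf{x},\mathbf{s}_{\mathrm{env}})\propto\exp(-\beta U_{\mathrm{env}}(\mathbf{s}_{\mathrm{env}}))\Big(\prod_{i=1}^K p_i(\mathbf{x}_i)\Big)\exp(-\beta U_{\mathrm{int}}(\mathbf{x},\mathbf{s}_{\mathrm{env}})).$$ Then $\pi_t(\mathbf{x},\mathbf{s}_{\mathrm{env}})\propto\pi_0(\mathbf{x},\mathbf{s}_{\mathrm{env}})$ if and only if $$\boldsymbol{\mu}_q(\mathbf{s}_{\mathrm{env}},t)=\mathbf{A}_t\boldsymbol{\mu}_c(\mathbf{s}_{\mathrm{env}}),\qquad \boldsymbol{\Sigma}_q(\mathbf{s}_{\mathrm{env}},t)=\mathbf{A}_t\boldsymbol{\Sigma}_c(\mathbf{s}_{\mathrm{env}})\mathbf{A}_t^\top-\boldsymbol{\Sigma}_t.$$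
   Context: $\mathcal{N}(\mathbf{z}\mid\boldsymbol{\mu},\boldsymbol{\Sigma})$ denotes the multivariate Gaussian density in $\mathbf{z}$ with mean $\boldsymbol{\mu}$ and (symmetric positive-definite) covariance $\boldsymbol{\Sigma}$. Here $\mathbf{s}_{\mathrm{sys}}$ collects the system coordinates coupled to the priors through the projections $\Phi_i(\mathbf{s})=\mathbf{s}_i$, and $q_t^{(i)}$ is the forward diffusion kernel of prior $i$. The proportionality $\pi_t(\mathbf{x},\mathbf{s}_{\mathrm{env}})\propto\pi_0(\mathbf{x},\mathbf{s}_{\mathrm{env}})$ is understood as proportionality in $\mathbf{x}$ with a constant that may depend on $\mathbf{s}_{\mathrm{env}}$ and $t$ but not on $\mathbf{x}$. *)

From HB Require Import structures.
From mathcomp Require Import all_boot all_order all_algebra.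
From mathcomp Require Import all_classical all_reals all_analysis.
Set Implicit Arguments. Unset Strict Implicit. Unset Printing Implicit Defensive.
Import Order.TTheory GRing.Theory Num.Theory.
Local Open Scope ring_scope.

Definition spd (R : realType) (n : nat) (S : 'M[R]_n) : Prop :=
  S^T = S /\ forall v : 'cV[R]_n, v != 0 -> 0 < (v^T *m S *m v) 0 0.

Definition mvn_pdf (R : realType) (n : nat) (z mu : 'cV[R]_n) (S : 'M[R]_n) : R :=
  (Num.sqrt (((pi : R) *+ 2) ^+ n * \det S))^-1 *
  expR (- (((z - mu)^T *m invmx S *m (z - mu)) 0 0) / 2).

(* Lebesgue integral over R^n, written as the iterated one-dimensional
   Lebesgue integral over the coordinates (Tonelli: equals the integral
   against n-dimensional Lebesgue measure for nonnegative measurable f). *)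
Fixpoint leb_int (R : realType) (n : nat) : ('cV[R]_n -> \bar R) -> \bar R :=
  match n return ('cV[R]_n -> \bar R) -> \bar R with
  | 0 => fun f => f 0
  | n'.+1 => fun f =>
      (\int[@lebesgue_measure R]_(r in setT)
         leb_int (fun z : 'cV[R]_n' => f (col_mx (r%:M : 'cV[R]_1) z)))%E
  end.

From HB Require Import structures.
From mathcomp Require Import all_boot all_order all_algebra.
From mathcomp Require Import all_classical all_reals all_analysis.
From mathcomp Require Import measurable_realfun ring lra.
Set Implicit Arguments. Unset Strict Implicit. Unset Printing Implicit Defensive.
Import Order.TTheory GRing.Theory Num.Theory.
Local Open Scope ring_scope.

(* Integrating out s_sys is a Gaussian convolution: pi_t(x, e) equals, up to a
   factor exp(-beta U_env(e)) prod_i p_i(x_i) shared with pi_0 and constants,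
   N(mu_q | A_t x, Sigma_q + Sigma_t) as a function of x, while pi_0 carries
   N(x | mu_c, Sigma_c). Two such Gaussian exponentials in x are proportional
   iff their quadratic and linear coefficients agree,
   A_t^T (Sigma_q + Sigma_t)^-1 A_t = Sigma_c^-1 and
   A_t^T (Sigma_q + Sigma_t)^-1 mu_q = Sigma_c^-1 mu_c,
   which for invertible A_t is the stated condition. The convolution identity
   comes from completing the square and from the Gaussian integral over R^n,
   computed coordinate by coordinate by splitting off the first coordinate
   with a Schur complement. *)

Section QuadraticForm.
Variables (R : realFieldType) (n : nat).
Implicit Types (S Q B : 'M[R]_n) (u v x y : 'cV[R]_n).

Definition qform S x : R := (x^T *m S *m x) 0 0.
Definition dotmx u x : R := (u^T *m x) 0 0.

Lemma qform0 S : qform S 0 = 0.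
Proof. by rewrite /qform mulmx0 mxE. Qed.

Lemma qformN S x : qform S (- x) = qform S x.
Proof. by rewrite /qform (linearN (@trmx R _ _)) /= mulNmx mulmxN mulNmx opprK. Qed.

Lemma qform_mulmx S B x : qform S (B *m x) = qform (B^T *m S *m B) x.
Proof. by rewrite /qform trmx_mul !mulmxA. Qed.

Lemma qformDl S Q x : qform (S + Q) x = qform S x + qform Q x.
Proof. by rewrite /qform mulmxDr mulmxDl mxE. Qed.

Lemma qformBl S Q x : qform (S - Q) x = qform S x - qform Q x.
Proof. by rewrite /qform mulmxBr mulmxBl !mxE. Qed.

Lemma dotmx0 u : dotmx u 0 = 0.
Proof. by rewrite /dotmx mulmx0 mxE. Qed.

Lemma dotmxN u x : dotmx u (- x) = - dotmx u x.
Proof. by rewrite /dotmx mulmxN mxE. Qed.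

Lemma dotmxNl u x : dotmx (- u) x = - dotmx u x.
Proof. by rewrite /dotmx (linearN (@trmx R _ _)) /= mulNmx mxE. Qed.

Lemma dotmxBl u v x : dotmx (u - v) x = dotmx u x - dotmx v x.
Proof. by rewrite /dotmx (linearB (@trmx R _ _)) /= mulmxBl !mxE. Qed.

Lemma dotmx_mulmx u B x : dotmx u (B *m x) = dotmx (B^T *m u) x.
Proof. by rewrite /dotmx trmx_mul trmxK mulmxA. Qed.

Lemma qformD S x y : S^T = S ->
  qform S (x + y) = qform S x + 2 * dotmx (S *m y) x + qform S y.
Proof.
move=> S_sym.
have xSy : (x^T *m S *m y) 0 0 = dotmx (S *m y) x.
  have tr11 (M : 'M[R]_1) : M^T 0 0 = M 0 0 by rewrite mxE.
  by rewrite /dotmx -[LHS]tr11 !trmx_mul trmxK S_sym mulmxA.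
have ySx : (y^T *m S *m x) 0 0 = dotmx (S *m y) x.
  by rewrite /dotmx trmx_mul S_sym.
rewrite /qform (linearD (@trmx R _ _)) /= !mulmxDl !mulmxDr.
rewrite ![((_ + _ : 'M[R]_1) 0 0)]mxE xSy ySx; ring.
Qed.

Lemma dotmx_delta u i : dotmx u (delta_mx i 0) = u i 0.
Proof. by rewrite /dotmx -colE !mxE. Qed.

Lemma dotmx_eq0 u : (forall x, dotmx u x = 0) -> u = 0.
Proof. by move=> u0; apply/matrixP => i j; rewrite (ord1 j) mxE -dotmx_delta. Qed.

Lemma sym_qform_eq0 S : S^T = S -> (forall x, qform S x = 0) -> S = 0.
Proof.
move=> S_sym S0; apply/matrixP => i j; rewrite mxE.
have := S0 (delta_mx i 0 + delta_mx j 0).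
by rewrite qformD // !S0 -colE dotmx_delta mxE; lra.
Qed.

Lemma qform_dotmx_const S u (k : R) : S^T = S ->
  (forall x, qform S x - 2 * dotmx u x = k) -> S = 0 /\ u = 0.
Proof.
move=> S_sym f_const.
have k0 : k = 0 by rewrite -(f_const 0) qform0 dotmx0 mulr0 subr0.
have qS x : qform S x = 0.
  by have := f_const x; have := f_const (- x); rewrite qformN dotmxN k0; lra.
split; first exact: sym_qform_eq0.
by apply: dotmx_eq0 => x; have := f_const x; rewrite qS k0; lra.
Qed.

Lemma qform_affine_coef Q1 Q2 B v1 v2 (k : R) : Q1^T = Q1 -> Q2^T = Q2 ->
  (forall x, qform Q1 (v1 - B *m x) = qform Q2 (x - v2) + k) ->
  B^T *m Q1 *m B = Q2 /\ B^T *m Q1 *m v1 = Q2 *m v2.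
Proof.
move=> Q1_sym Q2_sym eq_x.
have D_sym : (B^T *m Q1 *m B - Q2)^T = B^T *m Q1 *m B - Q2.
  by rewrite (linearB (@trmx R _ _)) /= !trmx_mul trmxK Q1_sym Q2_sym mulmxA.
have [|/eqP D0 /eqP l0] := qform_dotmx_const
  (u := B^T *m Q1 *m v1 - Q2 *m v2) (k := qform Q2 v2 + k - qform Q1 v1) D_sym.
  move=> x; have := eq_x x.
  rewrite addrC !qformD // !qformN mulmxN dotmxNl qformBl.
  by rewrite dotmxBl qform_mulmx dotmxN dotmx_mulmx mulmxA; lra.
by split; apply/eqP; rewrite -subr_eq0.
Qed.

End QuadraticForm.

Lemma qform_block_diag (R : realFieldType) n1 n2 (A : 'M[R]_n1) (D : 'M[R]_n2)
  (x : 'cV[R]_n1) (y : 'cV[R]_n2) :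
  qform (block_mx A 0 0 D) (col_mx x y) = qform A x + qform D y.
Proof.
by rewrite /qform tr_col_mx mul_row_block mul_row_col !mulmx0 !addr0 add0r mxE.
Qed.

Lemma qform_scalar_mx (R : realFieldType) (u : R) (A : 'M[R]_1) :
  qform A u%:M = A 0 0 * u ^+ 2.
Proof. rewrite /qform tr_scalar_mx mul_scalar_mx mul_mx_scalar !mxE; ring. Qed.

Lemma invmx_conj (R : comUnitRingType) n (S A : 'M[R]_n) :
  S \in unitmx -> A \in unitmx -> A^T *m invmx (A *m S *m A^T) *m A = invmx S.
Proof.
move=> S_unit A_unit.
have ASA_unit : A *m S *m A^T \in unitmx by rewrite !unitmx_mul unitmx_tr A_unit S_unit.
apply: (can_inj (mulKmx S_unit)); rewrite mulmxV //.
have -> : S *m (A^T *m invmx (A *m S *m A^T) *m A) =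
    invmx A *m (A *m S *m A^T *m invmx (A *m S *m A^T)) *m A.
  by rewrite !mulmxA mulVmx // mul1mx.
by rewrite mulmxV // mulmx1 mulVmx.
Qed.

Lemma det_invmx_add (R : comUnitRingType) n (S1 S2 : 'M[R]_n) :
  S1 \in unitmx -> S2 \in unitmx ->
  \det (invmx S1 + invmx S2) * (\det S1 * \det S2) = \det (S1 + S2).
Proof.
move=> S1_unit S2_unit.
rewrite mulrCA mulrA -!det_mulmx mulmxDr mulmxDl mulmxV // mulmxKV // mul1mx.
by rewrite addrC.
Qed.

Section PositiveDefinite.
Variable R : realType.

Lemma spd_sym n (S : 'M[R]_n) : spd S -> S^T = S.
Proof. by case. Qed.

Lemma spd_unitmx n (S : 'M[R]_n) : spd S -> S \in unitmx.
Proof.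
move=> [_ S_pos]; rewrite unitmxE unitfE; apply/negP => /det0P [v v0 vS].
by have := S_pos v^T; rewrite trmx_eq0 v0 trmxK vS mul0mx mxE ltxx => /(_ isT).
Qed.

Lemma spd_invmx n (S : 'M[R]_n) : spd S -> spd (invmx S).
Proof.
move=> S_spd; have S_unit := spd_unitmx S_spd; case: S_spd => S_sym S_pos.
split=> [|v v0]; first by rewrite trmx_inv S_sym.
have w0 : invmx S *m v != 0.
  by apply: contraNneq v0 => w0; rewrite -(mulKVmx S_unit v) w0 mulmx0.
have := S_pos _ w0.
by rewrite trmx_mul trmx_inv S_sym -!mulmxA mulKVmx.
Qed.

Lemma spdD n (S1 S2 : 'M[R]_n) : spd S1 -> spd S2 -> spd (S1 + S2).
Proof.
move=> [S1_sym S1_pos] [S2_sym S2_pos]; split=> [|v v0].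
  by rewrite linearD /= S1_sym S2_sym.
by rewrite mulmxDr mulmxDl mxE addr_gt0 ?S1_pos ?S2_pos.
Qed.

Section Schur.
Variables (n : nat) (P : 'M[R]_(1 + n)).
Hypothesis P_spd : spd P.

Definition schur_shift : 'cV[R]_n := invmx (drsubmx P) *m dlsubmx P.
Definition schur_compl : 'M[R]_1 := ulsubmx P - ursubmx P *m schur_shift.
Definition schur_lower : 'M[R]_(1 + n) := block_mx 1%:M 0 schur_shift 1%:M.

Lemma spd_drsubmx : spd (drsubmx P).
Proof.
split=> [|y y0]; first by rewrite trmx_drsub spd_sym.
have := P_spd.2 (col_mx 0 y); rewrite col_mx_eq0 eqxx y0 => /(_ isT).
rewrite -{1}(submxK P) tr_col_mx trmx0 mul_row_block mul_row_col !mul0mx !add0r.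
by rewrite mulmx0 add0r.
Qed.

Lemma schur_decomposition :
  P = schur_lower^T *m block_mx schur_compl 0 0 (drsubmx P) *m schur_lower.
Proof.
have Dm : drsubmx P *m schur_shift = dlsubmx P.
  by rewrite mulKVmx // (spd_unitmx spd_drsubmx).
have mD : schur_shift^T *m drsubmx P = ursubmx P.
  by rewrite -(spd_sym spd_drsubmx) -trmx_mul Dm trmx_dlsub spd_sym.
rewrite /schur_lower tr_block_mx !trmx1 !trmx0 !mulmx_block.
rewrite !(mul1mx, mulmx1, mul0mx, mulmx0, addr0, add0r) Dm mD.
by rewrite /schur_compl subrK submxK.
Qed.

Lemma qform_schur (u : R) (y : 'cV[R]_n) :
  qform P (col_mx u%:M y) =
  qform (drsubmx P) (y + u *: schur_shift) + schur_compl 0 0 * u ^+ 2.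
Proof.
rewrite {1}schur_decomposition -qform_mulmx /schur_lower mul_block_col.
rewrite !(mul1mx, mul0mx, addr0) qform_block_diag qform_scalar_mx mul_mx_scalar.
by rewrite (addrC (u *: _)) [LHS]addrC.
Qed.

Lemma schur_compl_gt0 : 0 < schur_compl 0 0.
Proof.
have := P_spd.2 (col_mx 1%:M (- schur_shift)).
rewrite col_mx_eq0 negb_and matrix_nonzero1 => /(_ isT).
by rewrite -/(qform _ _) qform_schur scale1r addNr qform0 add0r expr1n mulr1.
Qed.

Lemma det_schur : \det P = schur_compl 0 0 * \det (drsubmx P).
Proof.
rewrite {1}schur_decomposition !det_mulmx det_tr /schur_lower det_lblock det_ublock.
by rewrite !det1 det_mx11 !mul1r mulr1.
Qed.

End Schur.

Lemma spd_det_gt0 n (S : 'M[R]_n) : spd S -> 0 < \det S.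
Proof.
elim: n S => [|n IH] S S_spd; first by rewrite det_mx00.
rewrite (@det_schur n S S_spd) mulr_gt0 ?schur_compl_gt0 //.
exact/IH/spd_drsubmx.
Qed.

End PositiveDefinite.

Section GaussianIntegral.
Variable R : realType.

Lemma integral_expR_quadratic (k c a r0 : R) : 0 < a -> 0 <= k ->
  (\int[@lebesgue_measure R]_(r in setT) (k * expR (c - a * (r - r0) ^+ 2 / 2))%:E
   = (k * expR c * Num.sqrt (pi *+ 2 / a))%:E)%E.
Proof.
move=> a_gt0 k_ge0.
pose s := Num.sqrt a^-1.
have s2 : s ^+ 2 = a^-1 by rewrite sqr_sqrtr // invr_ge0 ltW.
have s_neq0 : s != 0 by rewrite gt_eqF // sqrtr_gt0 invr_gt0.
have peakV : (normal_peak s)^-1 = Num.sqrt (pi *+ 2 / a).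
  by rewrite /normal_peak invrK s2 mulrnAl mulrC mulrnAl.
have -> : (fun r => (k * expR (c - a * (r - r0) ^+ 2 / 2))%:E) =
          (fun r => (k * expR c / normal_peak s)%:E * (normal_pdf r0 s r)%:E)%E.
  apply/funext => r; rewrite -EFinM normal_pdfE // /normal_fun s2 [in RHS]mulrA divfK;
    last exact: lt0r_neq0 (normal_peak_gt0 s_neq0).
  rewrite -[in RHS]mulrA -expRD; congr (k * expR _)%:E; rewrite -mulr_natr; field.
  exact: lt0r_neq0.
rewrite ge0_integralZl //=; last 3 first.
- by apply/measurable_EFinP; exact: measurable_normal_pdf.
- by move=> r _; rewrite lee_fin normal_pdf_ge0.
- by rewrite lee_fin divr_ge0 ?mulr_ge0 ?expR_ge0 ?normal_peak_ge0.
by rewrite integral_normal_pdf mule1 peakV.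
Qed.

Lemma leb_int_gauss n (P : 'M[R]_n) (z0 : 'cV[R]_n) (c : R) : spd P ->
  leb_int (fun z => (expR (c - qform P (z - z0) / 2))%:E) =
  (Num.sqrt ((pi *+ 2) ^+ n / \det P) * expR c)%:E.
Proof.
elim: n P z0 c => [|n IH] P z0 c P_spd.
  by rewrite /= /qform mxE big_ord0 mul0r subr0 expr0 det_mx00 divr1 sqrtr1 mul1r.
have P1_spd : spd (P : 'M[R]_(1 + n)) by [].
have al_gt0 := schur_compl_gt0 P1_spd.
set al := schur_compl P 0 0 in al_gt0 *.
pose u0 := usubmx (z0 : 'cV[R]_(1 + n)) 0 0.
pose zd := dsubmx (z0 : 'cV[R]_(1 + n)).
have z0E : z0 = col_mx u0%:M zd by rewrite /u0 /zd -mx11_scalar vsubmxK.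
have inner (r : R) : leb_int (fun z => (expR (c - qform P (col_mx r%:M z - z0) / 2))%:E) =
    (Num.sqrt ((pi *+ 2) ^+ n / \det (drsubmx (P : 'M[R]_(1 + n)))) *
     expR (c - al * (r - u0) ^+ 2 / 2))%:E.
  rewrite -(IH _ (zd - (r - u0) *: schur_shift P)); last exact: spd_drsubmx.
  congr leb_int; apply/funext => z; congr (expR _)%:E.
  have diffE : col_mx r%:M z - z0 = col_mx (r - u0)%:M (z - zd) :> 'cV[R]_(1 + n).
    by rewrite z0E (opp_col_mx (u0%:M : 'cV[R]_1)) add_col_mx raddfB.
  rewrite diffE (qform_schur P1_spd) -/al opprB addrA (addrAC z); lra.
transitivity (\int[@lebesgue_measure R]_(r in setT)
  (Num.sqrt ((pi *+ 2) ^+ n / \det (drsubmx (P : 'M[R]_(1 + n)))) *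
   expR (c - al * (r - u0) ^+ 2 / 2))%:E)%E.
  by apply: eq_integral => r _; exact: inner.
rewrite integral_expR_quadratic ?sqrtr_ge0 //; congr EFin.
have D_det_gt0 := spd_det_gt0 (spd_drsubmx P1_spd).
have two_pi_gt0 : 0 < pi *+ 2 :> R by rewrite mulrn_wgt0 // pi_gt0.
rewrite mulrAC -sqrtrM ?divr_ge0 ?exprn_ge0 ?ltW //.
rewrite (det_schur P1_spd) -/al exprS; congr (_ * expR c); congr Num.sqrt.
by field; rewrite !lt0r_neq0.
Qed.

End GaussianIntegral.

Lemma qform_complete_square (R : realType) n (S1 S2 : 'M[R]_n) (m1 m2 s : 'cV[R]_n) :
  spd S1 -> spd S2 ->
  qform (invmx S1) (s - m1) + qform (invmx S2) (s - m2) =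
  qform (invmx S1 + invmx S2) (s - (m1 - S1 *m (invmx (S1 + S2) *m (m1 - m2)))) +
  qform (invmx (S1 + S2)) (m1 - m2).
Proof.
move=> S1_spd S2_spd; set s0 := m1 - S1 *m _.
have [S1_unit S2_unit] := (spd_unitmx S1_spd, spd_unitmx S2_spd).
have S12_spd := spdD S1_spd S2_spd; have S12_unit := spd_unitmx S12_spd.
have split_sum h g : qform (invmx S1) (h - S1 *m g) + qform (invmx S2) (h + S2 *m g) =
    qform (invmx S1 + invmx S2) h + qform (S1 + S2) g.
  rewrite !qformD ?(spd_sym (spd_invmx _)) // qformN !qform_mulmx mulmxN !mulKmx //.
  rewrite dotmxNl (spd_sym S1_spd) (spd_sym S2_spd) !mulmxV // !mul1mx !qformDl; lra.
set g := invmx (S1 + S2) *m (m1 - m2) in s0 *.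
have m12E : m1 - m2 = (S1 + S2) *m g by rewrite mulKVmx.
have sm1E : s - m1 = s - s0 - S1 *m g.
  by rewrite /s0; apply/matrixP => i j; rewrite !mxE; ring.
have sm2E : s - m2 = s - s0 + S2 *m g.
  have m2E : m2 = m1 - (S1 *m g + S2 *m g) by rewrite -mulmxDl -m12E opprB addrC subrK.
  by rewrite /s0 m2E; apply/matrixP => i j; rewrite !mxE; ring.
rewrite sm1E sm2E split_sum m12E [in RHS]qform_mulmx (spd_sym S12_spd).
by rewrite mulmxV // mul1mx.
Qed.


Section GaussianConvolution.
Variable R : realType.

Definition mvn_norm n (S : 'M[R]_n) : R := Num.sqrt ((pi *+ 2) ^+ n * \det S).

Lemma mvn_pdfE n (z mu : 'cV[R]_n) (S : 'M[R]_n) :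
  mvn_pdf z mu S = (mvn_norm S)^-1 * expR (- qform (invmx S) (z - mu) / 2).
Proof. by []. Qed.

Lemma mvn_norm_gt0 n (S : 'M[R]_n) : spd S -> 0 < mvn_norm S.
Proof.
move=> S_spd; rewrite sqrtr_gt0 mulr_gt0 ?spd_det_gt0 // exprn_gt0 //.
by rewrite mulrn_wgt0 // pi_gt0.
Qed.

Lemma leb_int_mvn_mul n (S1 S2 : 'M[R]_n) (m1 m2 : 'cV[R]_n) (k : R) :
  spd S1 -> spd S2 -> 0 < k ->
  leb_int (fun s => (k * mvn_pdf s m1 S1 * mvn_pdf s m2 S2)%:E) =
  (k * mvn_pdf m1 m2 (S1 + S2))%:E.
Proof.
move=> S1_spd S2_spd k_gt0.
have [N1_gt0 N2_gt0] := (mvn_norm_gt0 S1_spd, mvn_norm_gt0 S2_spd).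
have N12_gt0 := mvn_norm_gt0 (spdD S1_spd S2_spd).
have two_pi_gt0 : 0 < pi *+ 2 :> R by rewrite mulrn_wgt0 // pi_gt0.
have P_spd := spdD (spd_invmx S1_spd) (spd_invmx S2_spd).
pose K := k / (mvn_norm S1 * mvn_norm S2).
have K_gt0 : 0 < K by rewrite divr_gt0 ?mulr_gt0.
pose c := ln K + - qform (invmx (S1 + S2)) (m1 - m2) / 2.
pose s0 := m1 - S1 *m (invmx (S1 + S2) *m (m1 - m2)).
have normE : Num.sqrt ((pi *+ 2) ^+ n / \det (invmx S1 + invmx S2)) =
    mvn_norm S1 * mvn_norm S2 / mvn_norm (S1 + S2).
  have [d1_gt0 d2_gt0] := (spd_det_gt0 S1_spd, spd_det_gt0 S2_spd).
  have d12_gt0 := spd_det_gt0 (spdD S1_spd S2_spd).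
  rewrite /mvn_norm -sqrtrM ?mulr_ge0 ?exprn_ge0 ?ltW //.
  rewrite -sqrtrV ?mulr_ge0 ?exprn_ge0 ?ltW //.
  rewrite -sqrtrM ?mulr_ge0 ?exprn_ge0 ?ltW //.
  rewrite -(det_invmx_add (spd_unitmx S1_spd) (spd_unitmx S2_spd)); apply: congr1.
  by field; rewrite !lt0r_neq0 ?exprn_gt0 ?spd_det_gt0.
transitivity (leb_int (fun s : 'cV[R]_n =>
  (expR (c - qform (invmx S1 + invmx S2) (s - s0) / 2))%:E)).
  congr leb_int; apply/funext => s; congr EFin.
  have := qform_complete_square m1 m2 s S1_spd S2_spd; rewrite -/s0 => sq.
  have -> : c - qform (invmx S1 + invmx S2) (s - s0) / 2 =
      ln K + (- qform (invmx S1) (s - m1) / 2 + - qform (invmx S2) (s - m2) / 2).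
    by rewrite /c; lra.
  rewrite expRD lnK ?posrE // expRD !mvn_pdfE /K; field.
  by rewrite !lt0r_neq0.
rewrite leb_int_gauss // normE mvn_pdfE /c expRD lnK ?posrE // /K; congr EFin; field.
by rewrite !lt0r_neq0.
Qed.

End GaussianConvolution.

Section Proportionality.
Variable R : realType.

Definition proportional (T : Type) (f g : T -> R) :=
  exists c, 0 < c /\ forall x, f x = c * g x.

Lemma proportional_cancel (T : Type) (a b : R) (h f g : T -> R) :
  0 < a -> 0 < b -> (forall x, 0 < h x) ->
  proportional (fun x => a * h x * f x) (fun x => b * h x * g x) <-> proportional f g.
Proof.
move=> a_gt0 b_gt0 h_gt0.
split=> -[c [c_gt0 fg]]; [exists (c * b / a) | exists (c * a / b)].
  split=> [|x]; first by rewrite divr_gt0 ?mulr_gt0.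
  apply: (mulfI (lt0r_neq0 (mulr_gt0 a_gt0 (h_gt0 x)))); rewrite fg; field.
  exact: lt0r_neq0.
split=> [|x]; first by rewrite divr_gt0 ?mulr_gt0.
by rewrite fg; field; exact: lt0r_neq0.
Qed.

Lemma mvn_affine_proportional n (M Sc A : 'M[R]_n) (mq mc : 'cV[R]_n) :
  spd M -> spd Sc -> A \in unitmx ->
  proportional (fun x => mvn_pdf mq (A *m x) M) (fun x => mvn_pdf x mc Sc) <->
  mq = A *m mc /\ M = A *m Sc *m A^T.
Proof.
move=> M_spd Sc_spd A_unit.
have [NM_gt0 NSc_gt0] := (mvn_norm_gt0 M_spd, mvn_norm_gt0 Sc_spd).
have Sc_unit := spd_unitmx Sc_spd.
split=> [[c [c_gt0 prop_c]] | [-> M_eq]]; last first.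
  exists (mvn_norm Sc / mvn_norm M); split=> [|x]; first by rewrite divr_gt0.
  rewrite !mvn_pdfE [X in invmx X]M_eq -mulmxBr qform_mulmx invmx_conj // -qformN opprB.
  by field; rewrite !lt0r_neq0.
pose r := c * mvn_norm M / mvn_norm Sc.
have r_gt0 : 0 < r by rewrite divr_gt0 ?mulr_gt0.
have log_eq x : qform (invmx M) (mq - A *m x) = qform (invmx Sc) (x - mc) - 2 * ln r.
  have : expR (- qform (invmx M) (mq - A *m x) / 2) =
         expR (ln r + - qform (invmx Sc) (x - mc) / 2).
    rewrite expRD lnK ?posrE // /r.
    apply: (mulfI (invr_neq0 (lt0r_neq0 NM_gt0))); rewrite -mvn_pdfE prop_c mvn_pdfE.
    by field; rewrite !lt0r_neq0.
  by move/expR_inj; lra.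
have [AMA AMmq] := qform_affine_coef (spd_sym (spd_invmx M_spd))
  (spd_sym (spd_invmx Sc_spd)) log_eq.
have invME : invmx M = invmx (A *m Sc *m A^T).
  have At_unit : A^T \in unitmx by rewrite unitmx_tr.
  apply: (can_inj (mulKmx At_unit)); apply: (can_inj (mulmxK A_unit)).
  by rewrite /= AMA invmx_conj.
have M_eq : M = A *m Sc *m A^T by rewrite -[M]invmxK invME invmxK.
split=> //; rewrite -[mq](mulKVmx (spd_unitmx M_spd)) {1}M_eq -!mulmxA (mulmxA A^T) AMmq.
by rewrite (mulmxA Sc) mulmxV // mul1mx.
Qed.

End Proportionality.

Theorem proposition2 (R : realType) (K : nat) (d : 'I_K -> nat) (m : nat)
  (beta t : R)
  (p : forall i : 'I_K, 'cV[R]_(d i) -> R)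
  (qk : R -> forall i : 'I_K, 'cV[R]_(d i) -> 'cV[R]_(d i) -> R)
  (A : R -> 'M[R]_(\sum_i d i)%N) (Sig_t : R -> 'M[R]_(\sum_i d i)%N)
  (Uenv : 'cV[R]_m -> R) (Uint : 'cV[R]_(\sum_i d i)%N -> 'cV[R]_m -> R)
  (mu_c : 'cV[R]_m -> 'cV[R]_(\sum_i d i)%N)
  (Sig_c : 'cV[R]_m -> 'M[R]_(\sum_i d i)%N)
  (mu_q : 'cV[R]_m -> R -> 'cV[R]_(\sum_i d i)%N)
  (Sig_q : 'cV[R]_m -> R -> 'M[R]_(\sum_i d i)%N)
  (qctx : 'cV[R]_(\sum_i d i)%N -> 'cV[R]_m -> R -> R) :
  0 < beta -> 0 < t ->
  (forall i x, 0 < p i x) ->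
  (forall e, spd (Sig_c e)) ->
  (exists c : 'cV[R]_m -> R, (forall e, 0 < c e) /\
     forall s e, expR (- (beta * Uint s e)) = c e * mvn_pdf s (mu_c e) (Sig_c e)) ->
  spd (Sig_t t) -> A t \in unitmx ->
  (forall s x : 'cV[R]_(\sum_i d i)%N,
     \prod_i qk t i (submxcol s i) (submxcol x i) = mvn_pdf s (A t *m x) (Sig_t t)) ->
  (forall e, spd (Sig_q e t)) ->
  (exists C : R, 0 < C /\ forall s e,
     qctx s e t = C * expR (- (beta * Uenv e)) * mvn_pdf s (mu_q e t) (Sig_q e t)) ->
  let pi_t := fun (x : 'cV[R]_(\sum_i d i)%N) (e : 'cV[R]_m) =>
    leb_int (fun s : 'cV[R]_(\sum_i d i)%N =>
      (qctx s e t * \prod_i (p i (submxcol x i) * qk t i (submxcol s i) (submxcol x i)))%:E) in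
  let pi_0 := fun (x : 'cV[R]_(\sum_i d i)%N) (e : 'cV[R]_m) =>
    expR (- (beta * Uenv e)) * (\prod_i p i (submxcol x i)) * expR (- (beta * Uint x e)) in
  (forall e, exists c : R, 0 < c /\ forall x, pi_t x e = (c * pi_0 x e)%:E)
  <->
  (forall e, mu_q e t = A t *m mu_c e /\
             Sig_q e t = A t *m Sig_c e *m (A t)^T - Sig_t t).
Proof.
move=> _ _ p_gt0 Sc_spd [cU [cU_gt0 UintE]] St_spd A_unit qkE Sq_spd [C [C_gt0 qctxE]].
move=> pi_t pi_0; pose w e x := expR (- (beta * Uenv e)) * \prod_i p i (submxcol x i).
have w_gt0 e x : 0 < w e x by rewrite mulr_gt0 ?expR_gt0 // prodr_gt0.
have pi_tE e x : pi_t x e =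
    (C * w e x * mvn_pdf (mu_q e t) (A t *m x) (Sig_q e t + Sig_t t))%:E.
  have integrandE : (fun s => (qctx s e t *
      \prod_i (p i (submxcol x i) * qk t i (submxcol s i) (submxcol x i)))%:E) =
    (fun s => (C * w e x * mvn_pdf s (mu_q e t) (Sig_q e t) *
      mvn_pdf s (A t *m x) (Sig_t t))%:E).
    apply/funext => s.
    by rewrite qctxE big_split /= qkE /w; congr EFin; ring.
  have Cw_gt0 := mulr_gt0 C_gt0 (w_gt0 e x).
  by rewrite /pi_t integrandE (leb_int_mvn_mul _ _ (Sq_spd e) St_spd Cw_gt0).
have pi_0E e x : pi_0 x e = cU e * w e x * mvn_pdf x (mu_c e) (Sig_c e).
  by rewrite /pi_0 UintE /w; ring.
have propE e : proportional (fun x => mvn_pdf (mu_q e t) (A t *m x) (Sig_q e t + Sig_t t))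
    (fun x => mvn_pdf x (mu_c e) (Sig_c e)) <->
    mu_q e t = A t *m mu_c e /\ Sig_q e t = A t *m Sig_c e *m (A t)^T - Sig_t t.
  rewrite (mvn_affine_proportional _ _ (spdD (Sq_spd e) St_spd) (Sc_spd e) A_unit).
  by split=> -[-> SE]; split=> //; [rewrite -SE addrK | rewrite SE subrK].
split=> prop_pi e.
  apply/(propE e)/(proportional_cancel _ _ C_gt0 (cU_gt0 e) (w_gt0 e)).
  have [c [c_gt0 pi_c]] := prop_pi e.
  by exists c; split=> // x; move: (pi_c x); rewrite pi_tE pi_0E => -[].
have [c [c_gt0 prop_c]] :=
  (proportional_cancel _ _ C_gt0 (cU_gt0 e) (w_gt0 e)).2 ((propE e).2 (prop_pi e)).
by exists c; split=> // x; rewrite pi_tE pi_0E prop_c.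
Qed.
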